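(* Let $A$ be a DG algebra over a commutative ring $R$. The adjunction $\mathbb{F}\dashv\mathbb{U}$ between DG $R$-modules and left DG $A$-modules is a Quillen adjunction with respect to the $h$-model structures on both categories, with respect to the $q$-model structures on both, and with respect to the $r$-model structures on both.
   Context: $\mathbb{F}X=A\otimes_R X$, $\mathbb{U}$ forgetful. On DG $R$-modules: the $q$-model structure has quasi-isomorphisms as weak equivalences and degreewise surjections as fibrations; the $h$-model structure (which equals the $r$-model structure) has chain homotopy equivalences as weak equivalences, degreewise $R$-split epimorphisms as fibrations, degreewise $R$-split monomorphisms as cofibrations. On DG $A$-modules: the $q$-model structure has quasi-isomorphisms as weak equivalences and degreewise surjections as fibrations; the $r$-model structure has as weak equivalences maps which are chain homotopy equivalences of underlying DG $R$-modules and as fibrations the degreewise $R$-split epimorphisms; the $h$-model structure has as weak equivalences the homotopy equivalences of DG $A$-modules (homotopies being DG $A$-maps $X\otimes I\to Y$, $I$ the standard interval complex) and as fibrations the maps with the right lifting property against $i_0\colon W\to W\otimes I$ for all DG $A$-modules $W$. In each case cofibrations are maps with the left lifting property against acyclic fibrations. *)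

From HB Require Import structures.
From mathcomp Require Import all_boot all_order all_algebra.
Set Implicit Arguments. Unset Strict Implicit. Unset Printing Implicit Defensive.
Import Order.TTheory GRing.Theory Num.Theory.
Local Open Scope ring_scope.

Definition tr (R : pzRingType) (X : int -> lmodType R) (i j : int) (e : i = j)
  (x : X i) : X j := eq_rect i (fun n => (X n : Type)) x j e.

Arguments tr {R} X {i j} e x.

Lemma degL (i j : int) : i - 1 + j = i + j - 1. Proof. by rewrite addrAC. Qed.
Lemma degR (i j : int) : i + (j - 1) = i + j - 1. Proof. by rewrite addrA. Qed.
Lemma degK1 (n : int) : n + 1 - 1 = n. Proof. by rewrite addrK. Qed.
Lemma degK2 (n : int) : n - 1 + 1 = n. Proof. by rewrite subrK. Qed.

Definition ksign (R : pzRingType) (i : int) : R := (-1) ^+ absz i.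

Unset Implicit Arguments.
Record DGRMod (R : comPzRingType) := {
  dgr : int -> lmodType R;
  dgr_d : forall n : int, {linear dgr n -> dgr (n - 1)};
  dgr_dd : forall n (x : dgr n), dgr_d (n - 1) (dgr_d n x) = 0 }.

Record DGAlg (R : comPzRingType) := {
  alg : int -> lmodType R;
  dalg : forall n : int, {linear alg n -> alg (n - 1)};
  dalg_dd : forall n (x : alg n), dalg (n - 1) (dalg n x) = 0;
  amul : forall i j : int, alg i -> alg j -> alg (i + j);
  amul_linl : forall i j (k : R) (a a' : alg i) (b : alg j),
      amul i j (k *: a + a') b = k *: amul i j a b + amul i j a' b;
  amul_linr : forall i j (k : R) (a : alg i) (b b' : alg j),
      amul i j a (k *: b + b') = k *: amul i j a b + amul i j a b';
  aone : alg 0;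
  amul1l : forall i (a : alg i), amul 0 i aone a = tr alg (esym (add0r i)) a;
  amul1r : forall i (a : alg i), amul i 0 a aone = tr alg (esym (addr0 i)) a;
  amulA : forall i j k (a : alg i) (b : alg j) (c : alg k),
      amul (i + j) k (amul i j a b) c
      = tr alg (addrA i j k) (amul i (j + k) a (amul j k b c));
  dalg_leibniz : forall i j (a : alg i) (b : alg j),
      dalg (i + j) (amul i j a b)
      = tr alg (degL i j) (amul (i - 1) j (dalg i a) b)
        + ksign R i *: tr alg (degR i j) (amul i (j - 1) a (dalg j b)) }.

Record DGAMod (R : comPzRingType) (A : DGAlg R) := {
  amod : DGRMod R;
  act : forall i j : int, alg R A i -> dgr R amod j -> dgr R amod (i + j);
  act_linl : forall i j (k : R) (a a' : alg R A i) (x : dgr R amod j),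
      act i j (k *: a + a') x = k *: act i j a x + act i j a' x;
  act_linr : forall i j (k : R) (a : alg R A i) (x x' : dgr R amod j),
      act i j a (k *: x + x') = k *: act i j a x + act i j a x';
  act1 : forall j (x : dgr R amod j),
      act 0 j (aone R A) x = tr (dgr R amod) (esym (add0r j)) x;
  actA : forall i j k (a : alg R A i) (b : alg R A j) (x : dgr R amod k),
      act (i + j) k (amul R A i j a b) x
      = tr (dgr R amod) (addrA i j k) (act i (j + k) a (act j k b x));
  act_leibniz : forall i j (a : alg R A i) (x : dgr R amod j),
      dgr_d R amod (i + j) (act i j a x)
      = tr (dgr R amod) (degL i j) (act (i - 1) j (dalg R A i a) x)
        + ksign R i *: tr (dgr R amod) (degR i j) (act i (j - 1) a (dgr_d R amod j x)) }.

Record rmap (R : comPzRingType) (X Y : DGRMod R) := {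
  rmap_f : forall n, {linear dgr R X n -> dgr R Y n};
  rmap_d : forall n (x : dgr R X n),
      rmap_f (n - 1) (dgr_d R X n x) = dgr_d R Y n (rmap_f n x) }.

Record amap (R : comPzRingType) (A : DGAlg R) (M N : DGAMod R A) := {
  amap_r : rmap R (amod R A M) (amod R A N);
  amap_act : forall i j (a : alg R A i) (x : dgr R (amod R A M) j),
      rmap_f R _ _ amap_r (i + j) (act R A M i j a x) = act R A N i j a (rmap_f R _ _ amap_r j x) }.

Set Implicit Arguments.
Arguments dgr {R} _ _.
Arguments dgr_d {R} _ _.
Arguments alg {R} _ _.
Arguments dalg {R} _ _.
Arguments amul {R} _ _ _ _ _.
Arguments aone {R} _.
Arguments amod {R A} _.
Arguments act {R A} _ _ _ _ _.
Arguments rmap_f {R X Y} _ _.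
Arguments rmap {R} X Y.
Arguments amap {R A} M N.
Arguments amap_r {R A M N} _.
(* U on objects is [amod], on morphisms is [amap_r]. *)

Section Defs.
Variables (R : comPzRingType).

Definition cycle (X : DGRMod R) n (x : dgr X n) := dgr_d X n x = 0.
Definition bdry (X : DGRMod R) n (x : dgr X n) :=
  exists z : dgr X (n + 1), tr (dgr X) (degK1 n) (dgr_d X (n + 1) z) = x.

Definition qiso (X Y : DGRMod R) (f : rmap X Y) :=
  forall n,
    (forall x : dgr X n, cycle x -> bdry (rmap_f f n x) -> bdry x) /\
    (forall y : dgr Y n, cycle y ->
        exists x : dgr X n, cycle x /\ bdry (rmap_f f n x - y)).

Definition dsurj (X Y : DGRMod R) (f : rmap X Y) :=
  forall n (y : dgr Y n), exists x, rmap_f f n x = y.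

Definition rsplit (X Y : DGRMod R) (f : rmap X Y) :=
  forall n, exists s : {linear dgr Y n -> dgr X n},
    forall y, rmap_f f n (s y) = y.

(* H : X (x) I -> Y, with I the standard interval complex (I_0 = R[0] + R[1],
   I_1 = R[I], d[I] = [0] - [1]), written out componentwise:
   f = H(- (x) [0]), g = H(- (x) [1]), h = H(- (x) [I]);
   H d = d H  iff  d h(x) = h(dx) + (-1)^|x| (f x - g x). *)
Definition is_htpy (X Y : DGRMod R) (f g : forall n, dgr X n -> dgr Y n)
  (h : forall n, {linear dgr X n -> dgr Y (n + 1)}) :=
  forall n (x : dgr X n),
    tr (dgr Y) (degK1 n) (dgr_d Y (n + 1) (h n x))
    = tr (dgr Y) (degK2 n) (h (n - 1) (dgr_d X n x)) + ksign R n *: (f n x - g n x).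

Definition rheq (X Y : DGRMod R) (f : rmap X Y) :=
  exists g : rmap Y X,
    (exists h, is_htpy (fun n x => rmap_f g n (rmap_f f n x)) (fun n x => x) h) /\
    (exists h, is_htpy (fun n y => rmap_f f n (rmap_f g n y)) (fun n y => y) h).

Variable (A : DGAlg R).

Definition af (M N : DGAMod R A) (p : amap M N) n (x : dgr (amod M) n) :=
  rmap_f (amap_r p) n x.

(* homotopy of DG A-modules = DG A-map X (x) I -> Y (A acts on the X factor):
   the chain-level data plus A-linearity of the [I]-component *)
Definition is_ahtpy (M N : DGAMod R A) (f g : forall n, dgr (amod M) n -> dgr (amod N) n)
  (h : forall n, {linear dgr (amod M) n -> dgr (amod N) (n + 1)}) :=
  is_htpy f g h /\
  forall i j (a : alg A i) (x : dgr (amod M) j),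
    h (i + j) (act M i j a x) = tr (dgr (amod N)) (addrA i j 1) (act N i (j + 1) a (h j x)).

Definition aheq (M N : DGAMod R A) (p : amap M N) :=
  exists q : amap N M,
    (exists h, is_ahtpy (fun n x => af q (af p x)) (fun n x => x) h) /\
    (exists h, is_ahtpy (fun n y => af p (af q y)) (fun n y => y) h).

(* h-fibration of DG A-modules: right lifting property against
   i_0 : W -> W (x) I for every DG A-module W.  A commutative square
   (u : W -> E, H : W (x) I -> B, H i_0 = p u) is a triple (g, h) with h a
   homotopy from p u to g; a lift L : W (x) I -> E with L i_0 = u, p L = H is a
   homotopy (g', h') from u with p g' = g and p h' = h. *)
Definition ahfib (E B : DGAMod R A) (p : amap E B) :=
  forall (W : DGAMod R A) (u : amap W E) (g : amap W B)
         (h : forall n, {linear dgr (amod W) n -> dgr (amod B) (n + 1)}),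
    is_ahtpy (fun n x => af p (af u x)) (fun n x => af g x) h ->
    exists (g' : amap W E)
           (h' : forall n, {linear dgr (amod W) n -> dgr (amod E) (n + 1)}),
      is_ahtpy (fun n x => af u x) (fun n x => af g' x) h' /\
      (forall n x, af p (af g' (n := n) x) = af g x) /\
      (forall n x, rmap_f (amap_r p) (n + 1) (h' n x) = h n x).

(* Quillen adjunction F -| U, in the right-adjoint form: U preserves
   fibrations and acyclic fibrations. *)
Definition U_right_Quillen
  (fibA weA : forall M N : DGAMod R A, amap M N -> Prop)
  (fibR weR : forall X Y : DGRMod R, rmap X Y -> Prop) :=
  forall (M N : DGAMod R A) (p : amap M N),
    (fibA M N p -> fibR _ _ (amap_r p)) /\
    (fibA M N p /\ weA M N p -> fibR _ _ (amap_r p) /\ weR _ _ (amap_r p)).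

Definition q_fibR (X Y : DGRMod R) (f : rmap X Y) := dsurj f.
Definition q_weR (X Y : DGRMod R) (f : rmap X Y) := qiso f.
Definition h_fibR (X Y : DGRMod R) (f : rmap X Y) := rsplit f.   (* = r_fibR *)
Definition h_weR (X Y : DGRMod R) (f : rmap X Y) := rheq f.      (* = r_weR *)

Definition q_fibA (M N : DGAMod R A) (p : amap M N) := dsurj (amap_r p).
Definition q_weA (M N : DGAMod R A) (p : amap M N) := qiso (amap_r p).
Definition r_fibA (M N : DGAMod R A) (p : amap M N) := rsplit (amap_r p).
Definition r_weA (M N : DGAMod R A) (p : amap M N) := rheq (amap_r p).
Definition h_fibA (M N : DGAMod R A) (p : amap M N) := ahfib p.
Definition h_weA (M N : DGAMod R A) (p : amap M N) := aheq p.

End Defs.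

(* The q- and r-model structures on DG A-modules are created by U, so there U
   preserves fibrations and weak equivalences on the nose; an A-homotopy
   equivalence is in particular an R-homotopy equivalence.  The only real point
   is that an h-fibration p : E -> B is degreewise R-split.  For this, take the
   cone C of id_B, C_n = B_(n+1) (+) B_n with d(b', b) = (db' + (-1)^n b, db).
   The first projection is an A-homotopy from 0 to the second projection
   C -> B, which is A-linear; lifting it along p from the zero map C -> E gives
   an A-map g : C -> E over the second projection, and y |-> g(0, y) is an
   R-linear section of p. *)
From HB Require Import structures.
From mathcomp Require Import all_boot all_algebra zify.
Set Implicit Arguments. Unset Strict Implicit.
Import GRing.Theory.
Local Open Scope ring_scope.

Lemma ksignD (R : comPzRingType) (i j : int) :
  ksign R (i + j) = ksign R i * ksign R j.
Proof.
rewrite /ksign -exprD -signr_odd -[in RHS]signr_odd -!modn2.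
by have -> : (absz (i + j)%R %% 2 = (absz i + absz j) %% 2)%N by lia.
Qed.

Lemma ksignB1 (R : comPzRingType) (i : int) : ksign R (i - 1) = - ksign R i.
Proof. by rewrite ksignD /ksign expr1 mulrN1. Qed.

Definition pack_linear (R : comPzRingType) (U V : lmodType R) (f : U -> V)
  (f_linear : linear f) : {linear U -> V} :=
  HB.pack f (GRing.isLinear.Build R U V _ f f_linear).

Section Transport.
Variables (R : comPzRingType) (X : int -> lmodType R).

Lemma tr_irr i j (e1 e2 : i = j) (x : X i) : tr X e1 x = tr X e2 x.
Proof. by rewrite (eq_irrelevance e1 e2). Qed.

Lemma tr_trans i j k (e1 : i = j) (e2 : j = k) (x : X i) :
  tr X e2 (tr X e1 x) = tr X (etrans e1 e2) x.
Proof. by case: k / e2; case: j / e1. Qed.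

Lemma tr_id i (e : i = i) (x : X i) : tr X e x = x.
Proof. exact: (tr_irr e erefl). Qed.

Lemma trD i j (e : i = j) (x y : X i) : tr X e (x + y) = tr X e x + tr X e y.
Proof. by case: j / e. Qed.

Lemma trZ i j (e : i = j) k (x : X i) : tr X e (k *: x) = k *: tr X e x.
Proof. by case: j / e. Qed.

Lemma tr0 i j (e : i = j) : tr X e 0 = 0.
Proof. by case: j / e. Qed.

End Transport.

Lemma dgr_d_tr (R : comPzRingType) (X : DGRMod R) i j (e : i = j) (x : dgr X i) :
  dgr_d X j (tr (dgr X) e x) = tr (dgr X) (congr1 (fun n => n - 1) e) (dgr_d X i x).
Proof. by case: j / e. Qed.

Section Action.
Variables (R : comPzRingType) (A : DGAlg R) (M : DGAMod R A).
Notation Md := (dgr (amod M)).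

Definition act_lin i j (a : alg A i) : {linear Md j -> Md (i + j)} :=
  pack_linear (fun k => @act_linr R A M i j k a).

Lemma act0 i j (a : alg A i) : act M i j a 0 = 0.
Proof. exact: (linear0 (act_lin j a)). Qed.

Lemma actD i j (a : alg A i) (x y : Md j) :
  act M i j a (x + y) = act M i j a x + act M i j a y.
Proof. exact: (linearD (act_lin j a)). Qed.

Lemma actZ i j k (a : alg A i) (x : Md j) :
  act M i j a (k *: x) = k *: act M i j a x.
Proof. exact: (linearZ_LR (act_lin j a)). Qed.

Lemma act_tr i j k (e : j = k) (a : alg A i) (x : Md j) :
  act M i k a (tr Md e x) = tr Md (congr1 (fun n => i + n) e) (act M i j a x).
Proof. by case: k / e. Qed.

End Action.

Definition amap0 (R : comPzRingType) (A : DGAlg R) (M N : DGAMod R A) : amap M N.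
Proof.
unshelve refine (Build_amap R A M N (Build_rmap R _ _ (fun n => \0) _) _).
  by move=> n x /=; rewrite linear0.
by move=> i j a x /=; rewrite act0.
Defined.

Section Cone.
Variables (R : comPzRingType) (A : DGAlg R) (B : DGAMod R A).
Notation Bd := (dgr (amod B)).
Notation dB := (dgr_d (amod B)).

Definition cone_deg (n : int) : lmodType R := (Bd (n + 1) * Bd n)%type.

Definition cone_d n (x : cone_deg n) : cone_deg (n - 1) :=
  (tr Bd (etrans (degK1 n) (esym (degK2 n))) (dB (n + 1) x.1)
     + ksign R n *: tr Bd (esym (degK2 n)) x.2,
   dB n x.2).

Lemma cone_d_linear n : linear (@cone_d n).
Proof.
move=> k x y; apply: injective_projections => /=; last by rewrite linearP.
rewrite linearP !trD !trZ !scalerDr !scalerA mulrC.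
by rewrite [LHS]addrACA.
Qed.

Lemma cone_dd n (x : cone_deg n) : cone_d (cone_d x) = 0.
Proof.
apply: injective_projections => /=; last by rewrite dgr_dd.
rewrite linearD linearZ dgr_d_tr dgr_dd !tr0 add0r dgr_d_tr trZ !tr_trans.
rewrite ksignB1 scaleNr; apply/eqP; rewrite subr_eq0; apply/eqP.
by congr (_ *: _); apply: tr_irr.
Qed.

Definition coneR : DGRMod R :=
  Build_DGRMod R cone_deg (fun n => pack_linear (@cone_d_linear n)) cone_dd.

Lemma tr_cone1 i j (e : i = j) (x : dgr coneR i) :
  (tr (dgr coneR) e x).1 = tr Bd (congr1 (fun n => n + 1) e) x.1.
Proof. by case: j / e. Qed.

Lemma tr_cone2 i j (e : i = j) (x : dgr coneR i) :
  (tr (dgr coneR) e x).2 = tr Bd e x.2.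
Proof. by case: j / e. Qed.

Definition cone_act i j (a : alg A i) (x : dgr coneR j) : dgr coneR (i + j) :=
  (tr Bd (addrA i j 1) (act B i (j + 1) a x.1), act B i j a x.2).

Lemma cone_act_linl i j (k : R) (a a' : alg A i) (x : dgr coneR j) :
  cone_act (k *: a + a') x = k *: cone_act a x + cone_act a' x.
Proof. by apply: injective_projections => /=; rewrite act_linl // trD trZ. Qed.

Lemma cone_act_linr i j (k : R) (a : alg A i) (x x' : dgr coneR j) :
  cone_act a (k *: x + x') = k *: cone_act a x + cone_act a x'.
Proof. by apply: injective_projections => /=; rewrite act_linr // trD trZ. Qed.

Lemma cone_act1 j (x : dgr coneR j) :
  cone_act (aone A) x = tr (dgr coneR) (esym (add0r j)) x.
Proof.
apply: injective_projections; rewrite ?tr_cone1 ?tr_cone2 /= act1 //.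
by rewrite tr_trans; apply: tr_irr.
Qed.

Lemma cone_actA i j k (a : alg A i) (b : alg A j) (x : dgr coneR k) :
  cone_act (amul A i j a b) x = tr (dgr coneR) (addrA i j k) (cone_act a (cone_act b x)).
Proof.
apply: injective_projections; rewrite ?tr_cone1 ?tr_cone2 /= actA //.
by rewrite act_tr !tr_trans; apply: tr_irr.
Qed.

Lemma cone_act_leibniz i j (a : alg A i) (x : dgr coneR j) :
  dgr_d coneR (i + j) (cone_act a x)
  = tr (dgr coneR) (degL i j) (cone_act (dalg A i a) x)
    + ksign R i *: tr (dgr coneR) (degR i j) (cone_act a (dgr_d coneR j x)).
Proof.
apply: injective_projections; rewrite /= ?tr_cone1 ?tr_cone2 /=; last first.
  by rewrite act_leibniz.
rewrite dgr_d_tr act_leibniz actD actZ !act_tr !trD !trZ !tr_trans ksignD.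
rewrite scalerDr scalerA [RHS]addrA.
by congr (_ + _ *: _ + _ *: _); apply: tr_irr.
Qed.

Definition cone : DGAMod R A :=
  Build_DGAMod R A coneR cone_act cone_act_linl cone_act_linr cone_act1 cone_actA
    cone_act_leibniz.

Definition cone_pr1 n : {linear dgr (amod cone) n -> Bd (n + 1)} :=
  pack_linear (fun k (x y : dgr (amod cone) n) => erefl (k *: x.1 + y.1)).

Definition cone_pr2 : amap cone B :=
  Build_amap R A cone B
    (Build_rmap R _ _ (fun n => pack_linear
       (fun k (x y : dgr (amod cone) n) => erefl (k *: x.2 + y.2)))
       (fun n x => erefl))
    (fun i j a x => erefl).

Lemma cone_pr1_ahtpy (E : DGAMod R A) (p : amap E B) :
  is_ahtpy (fun n x => af p (af (amap0 cone E) x)) (fun n x => af cone_pr2 x) cone_pr1.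
Proof.
split=> // n x /=; rewrite /af /= linear0 sub0r.
rewrite trD trZ !tr_trans tr_id scalerN (addrK (ksign R n *: x.2)).
exact: tr_irr.
Qed.

Lemma ahfib_rsplit (E : DGAMod R A) (p : amap E B) : ahfib p -> rsplit (amap_r p).
Proof.
move=> p_hfib n.
have [g [_ [_ [pg _]]]] := p_hfib _ _ _ _ (cone_pr1_ahtpy p).
pose s (y : Bd n) := af g (n := n) ((0 : Bd (n + 1)), y).
have s_linear : linear s.
  move=> k y z; rewrite /s /af -linearP; congr (rmap_f _ _ _).
  by apply: injective_projections => //=; rewrite scaler0 addr0.
by exists (pack_linear s_linear) => y; apply: (pg n).
Qed.

End Cone.

Lemma aheq_rheq (R : comPzRingType) (A : DGAlg R) (M N : DGAMod R A) (p : amap M N) :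
  aheq p -> rheq (amap_r p).
Proof.
case=> q [[h1 [qp_htpy _]] [h2 [pq_htpy _]]].
by exists (amap_r q); split; [exists h1 | exists h2].
Qed.

Theorem lemma5p5 (R : comPzRingType) (A : DGAlg R) :
  U_right_Quillen (@h_fibA R A) (@h_weA R A) (@h_fibR R) (@h_weR R) /\
  U_right_Quillen (@q_fibA R A) (@q_weA R A) (@q_fibR R) (@q_weR R) /\
  U_right_Quillen (@r_fibA R A) (@r_weA R A) (@h_fibR R) (@h_weR R).
Proof.
split; last by split=> M N p; split=> // -[].
move=> M N p; split=> [|[p_fib p_we]]; first exact: ahfib_rsplit.
by split; [exact: ahfib_rsplit | exact: aheq_rheq].
Qed.
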